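(* Let $\mathcal{P}=\{P_1,\ldots,P_n\}$, let $\mathcal{Q}\subseteq 2^{\mathcal{P}}$ and let $\mathcal{F}\subseteq 2^{\mathcal{P}}$ be a fail-prone system. Let $I=\langle \xi_{\mathcal{Q}_{\bar X}},\ \xi_{\mathcal{Q}_{\bar Y}},\ \lambda,\ \delta\rangle\subseteq\mathbb{B}(\bar X,\bar Y,\bar T)$ and let $\mathcal{G}$ be a Gröbner basis for $I$. If $|SM(\mathcal{G})|=|\mathcal{Q}|^2\cdot|\mathcal{F}^*|$, then $\mathcal{Q}$ fulfills dissemination consistency with respect to $\mathcal{F}$, i.e. $Q_1\cap Q_2\not\subseteq F$ for all $Q_1,Q_2\in\mathcal{Q}$ and all $F\in\mathcal{F}$.
   Context: $\mathbb{B}=\mathbb{F}_2$; $\mathbb{B}(\bar X,\bar Y,\bar T)$ is the Boolean polynomial ring $\mathbb{B}[X_1,\ldots,X_n,Y_1,\ldots,Y_n,T_1,\ldots,T_n]$ modulo $\langle X_i^2-X_i,Y_i^2-Y_i,T_i^2-T_i\rangle$. $\varphi:2^{\mathcal{P}}\to\mathbb{B}^n$ sends a set to its indicator vector. For $S\subseteq\mathcal{P}$, $\xi_S(\bar Z)=\prod_{i=1}^n(1+Z_i+\varphi(S)_i)$; for $\mathcal{A}\subseteq 2^{\mathcal{P}}$, $\xi_{\mathcal{A}_{\bar Z}}=\prod_{A\in\mathcal{A}}(\xi_A(\bar Z)+1)$. $\gamma(\bar X,\bar Y)=\prod_{i=1}^n(X_iY_i+Y_i+1)+1$, and $\lambda(\bar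 T)=\prod_{F\in\mathcal{F}}\gamma(\varphi(F),\bar T)$. $\delta(\bar X,\bar Y,\bar T)=\prod_{i=1}^n(T_iX_iY_i+X_iY_i+1)$. $\mathcal{F}^*=\{F'\subseteq F: F\in\mathcal{F}\}$. A fail-prone system is a collection of subsets of $\mathcal{P}$ none of which is contained in another. Monomial order: lexicographic with block order $\bar T<\bar Y<\bar X$ and within each block $X_n\prec\cdots\prec X_1$ etc. A Gröbner basis of $I$ is a generating set $\mathcal{G}$ such that every nonzero $f\in I$ has leading monomial divisible by that of some $g\in\mathcal{G}$; $SM(\mathcal{G})$ is the set of multilinear monomials not in the ideal generated by the leading monomials of elements of $I$. *)

(* Boolean polynomial ring B(X,Y,T) = F_2[X,Y,T]/<Z^2-Z>,
   represented by its canonical multilinear representatives: a Boolean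
   polynomial in k variables is its coefficient function on multilinear
   monomials, a monomial being the set of variables occurring in it. *)
From HB Require Import structures.
From mathcomp Require Import all_boot all_order all_algebra.
Set Implicit Arguments. Unset Strict Implicit. Unset Printing Implicit Defensive.
Import Order.TTheory GRing.Theory.
Local Open Scope ring_scope.

Definition mono (k : nat) := {set 'I_k}.
Definition bpoly (k : nat) := {ffun {set 'I_k} -> 'F_2}.

Section BoolPoly.
Variable k : nat.

Definition bmono (m : {set 'I_k}) : bpoly k := [ffun m' => ((m' == m) : nat)%:R].
Definition bconst (c : 'F_2) : bpoly k := [ffun m => if m == set0 then c else 0].
Definition bvar (j : 'I_k) : bpoly k := bmono [set j].
Definition bone : bpoly k := bmono set0.

(* product in the Boolean ring: monomials multiply by union (Z_i^2 = Z_i) *)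
Definition bmul (p q : bpoly k) : bpoly k :=
  [ffun m => \sum_(a : {set 'I_k}) \sum_(b : {set 'I_k} | a :|: b == m) p a * q b].

Definition bprod (s : seq (bpoly k)) : bpoly k := foldr bmul bone s.

Definition ideal_gen (s : seq (bpoly k)) (f : bpoly k) : bool :=
  [exists c : {ffun 'I_(size s) -> bpoly k},
     f == \sum_(i < size s) bmul (c i) (s`_i)].

(* lexicographic order on multilinear monomials, variable 0 being the largest:
   m1 < m2 iff at the first variable where they differ, m2 contains it *)
Definition mlt (m1 m2 : {set 'I_k}) : bool :=
  [exists i : 'I_k, [&& i \in m2, i \notin m1 &
     [forall j : 'I_k, (j < i)%N ==> ((j \in m1) == (j \in m2))]]].

Definition is_LM (p : bpoly k) (m : {set 'I_k}) : bool :=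
  (p m != 0) && [forall m' : {set 'I_k}, (p m' != 0) ==> ((m' == m) || mlt m' m)].

Definition is_groebner (I : pred (bpoly k)) (G : seq (bpoly k)) : Prop :=
  (forall f, I f = ideal_gen G f) /\
  (forall f, I f -> f != 0 ->
     exists2 g, g \in G & exists mf mg, [/\ is_LM f mf, is_LM g mg & mg \subset mf]).

Definition LMset (I : pred (bpoly k)) : {set {set 'I_k}} :=
  [set m | [exists f : bpoly k, [&& I f, f != 0 & is_LM f m]]].

Definition SM (I : pred (bpoly k)) : {set {set 'I_k}} :=
  [set m | ~~ ideal_gen [seq bmono l | l <- enum (LMset I)] (bmono m)].

End BoolPoly.
Arguments bconst {k} c.
Arguments bone {k}.

Section Ideal.
Variable n : nat.
Notation k := (n + n + n)%N.

(* variables: X_i has index i, Y_i has index n+i, T_i has index 2n+i *)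
Definition Xv (i : 'I_n) : bpoly k := bvar (lshift n (lshift n i)).
Definition Yv (i : 'I_n) : bpoly k := bvar (lshift n (rshift n i)).
Definition Tv (i : 'I_n) : bpoly k := bvar (rshift (n + n) i).

Definition phi (S : {set 'I_n}) (i : 'I_n) : 'F_2 := ((i \in S) : nat)%:R.

Definition xi (S : {set 'I_n}) (Z : 'I_n -> bpoly k) : bpoly k :=
  bprod [seq bconst 1 + Z i + bconst (phi S i) | i <- enum 'I_n].

Definition xiA (A : {set {set 'I_n}}) (Z : 'I_n -> bpoly k) : bpoly k :=
  bprod [seq xi A0 Z + bconst 1 | A0 <- enum A].

Definition gamma (c : 'I_n -> 'F_2) (Z : 'I_n -> bpoly k) : bpoly k :=
  bprod [seq bmul (bconst (c i)) (Z i) + Z i + bconst 1 | i <- enum 'I_n] + bconst 1.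

Definition lambda (F : {set {set 'I_n}}) : bpoly k :=
  bprod [seq gamma (phi F0) Tv | F0 <- enum F].

Definition delta : bpoly k :=
  bprod [seq bmul (Tv i) (bmul (Xv i) (Yv i)) + bmul (Xv i) (Yv i) + bconst 1
        | i <- enum 'I_n].

Definition ideal_I (Q F : {set {set 'I_n}}) : pred (bpoly k) :=
  ideal_gen [:: xiA Q Xv; xiA Q Yv; lambda F; delta].

Definition fail_prone (F : {set {set 'I_n}}) : Prop :=
  forall F1 F2, F1 \in F -> F2 \in F -> F1 \subset F2 -> F1 = F2.

Definition Fstar (F : {set {set 'I_n}}) : {set {set 'I_n}} :=
  [set F' : {set 'I_n} | [exists F0 in F, F' \subset F0]].

End Ideal.

From mathcomp Require Import all_boot all_order all_algebra.
From mathcomp Require Import ring.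

(* Over F_2 a Boolean polynomial is determined by its values on {0,1}^k, and
   a polynomial vanishing on the common zeros V of the generators of I lies in I
   (Boolean Nullstellensatz).  Hence distinct sets of non-leading monomials
   induce distinct functions on V, so #|SM| <= #|V|.  A point of V is determined
   by its X-, Y- and T-supports (A, B, T), where A, B are in Q, T is in F* and
   A :&: B is not contained in T.  If Q1 :&: Q2 were contained in F0, the triple
   (Q1, Q2, F0) would be missing, so #|V| < |Q|^2 |F*| = #|SM|. *)

Set Implicit Arguments. Unset Strict Implicit. Unset Printing Implicit Defensive.
Import GRing.Theory.
Local Open Scope ring_scope.

Lemma F2_neq0 (z : 'F_2) : z != 0 -> z = 1.
Proof. by case: z => [[|[|m]] //] lt_z2 _; apply: val_inj. Qed.

Lemma natb_inj : injective (fun b : bool => (b : nat)%:R : 'F_2).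
Proof. by case; case => // /(congr1 val). Qed.

Lemma natb_eq0 (b : bool) : (((b : nat)%:R : 'F_2) == 0) = ~~ b.
Proof. by case: b; rewrite ?oner_eq0 ?eqxx. Qed.

Lemma prod_natb (I : Type) (r : seq I) (P : pred I) :
  \prod_(i <- r) ((P i : nat)%:R : 'F_2) = (all P r : nat)%:R.
Proof.
elim: r => [|a r IH]; first by rewrite big_nil.
by rewrite big_cons IH /=; case: (P a); case: (all P r); apply: val_inj.
Qed.

Lemma all_enum_imply (T : finType) (A B : {set T}) :
  all (fun i => (i \in A) ==> (i \in B)) (enum T) = (A \subset B).
Proof.
apply/allP/subsetP => h i; last by move=> _; apply/implyP/h.
by apply/implyP/h; rewrite mem_enum.
Qed.

Lemma all_enum_eq (T : finType) (A B : {set T}) :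
  all (fun i => (i \in A) == (i \in B)) (enum T) = (A == B).
Proof.
apply/allP/eqP => [h | -> //]; apply/setP => i.
by apply/eqP/h; rewrite mem_enum.
Qed.

Lemma one_sub_prod_telescope (R : comPzRingType) (a : nat -> R) m :
  1 - \prod_(j < m) (1 - a j) = \sum_(i < m) a i * \prod_(j < i) (1 - a j).
Proof.
elim: m => [|m IH]; first by rewrite !big_ord0 subrr.
rewrite big_ord_recr [RHS]big_ord_recr /= -IH; ring.
Qed.

Section Evaluation.
Variable k : nat.
Implicit Types (p q : bpoly k) (x m : {set 'I_k}) (s : seq (bpoly k)).

(* beval p x is the value of p at the 0/1-point with support x; points, like
   monomials, are subsets of 'I_k. *)
Definition beval p : bpoly k :=
  [ffun x : {set 'I_k} => \sum_(m : {set 'I_k} | m \subset x) p m].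

Lemma bevalE p x : beval p x = \sum_(m : {set 'I_k} | m \subset x) p m.
Proof. by rewrite ffunE. Qed.

Lemma beval0 x : beval 0 x = 0.
Proof. by rewrite bevalE big1 // => m _; rewrite ffunE. Qed.

Lemma bevalD p q x : beval (p + q) x = beval p x + beval q x.
Proof. by rewrite !bevalE -big_split; apply: eq_bigr => m _; rewrite ffunE. Qed.

Lemma bevalB p q x : beval (p - q) x = beval p x - beval q x.
Proof. by rewrite !bevalE -sumrB; apply: eq_bigr => m _; rewrite !ffunE. Qed.

Lemma beval_sum (I : finType) (f : I -> bpoly k) x :
  beval (\sum_i f i) x = \sum_i beval (f i) x.
Proof. exact: (big_morph (fun p => beval p x) (fun p q => bevalD p q x) (beval0 x)). Qed.

Lemma bevalM p q x : beval (bmul p q) x = beval p x * beval q x.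
Proof.
rewrite !bevalE big_distrlr /=.
transitivity (\sum_a \sum_(b | a :|: b \subset x) p a * q b).
  under eq_bigr => m _ do rewrite ffunE.
  rewrite exchange_big /=; apply: eq_bigr => a _.
  under eq_bigr => m _ do rewrite big_mkcond.
  rewrite exchange_big [RHS]big_mkcond /=; apply: eq_bigr => b _.
  rewrite big_mkcond (bigD1 (a :|: b)) //= eqxx big1 ?addr0 // => m hm.
  by rewrite eq_sym (negbTE hm) if_same.
rewrite [RHS]big_mkcond; apply: eq_bigr => a _.
case: ifP => ha; first by apply: eq_bigl => b; rewrite subUset ha.
by rewrite big_pred0 // => b; rewrite subUset ha.
Qed.

Lemma beval_bmono m x : beval (bmono m) x = (m \subset x : nat)%:R.
Proof.
rewrite bevalE big_mkcond (bigD1 m) //= ffunE eqxx big1 ?addr0; first by case: ifP.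
by move=> m' hm'; rewrite ffunE (negbTE hm') if_same.
Qed.

Lemma beval_bconst c x : beval (bconst c) x = c.
Proof.
rewrite bevalE (bigD1 set0) ?sub0set //= ffunE eqxx big1 ?addr0 // => m /andP[_ hm].
by rewrite ffunE (negbTE hm).
Qed.

Lemma beval_bvar j x : beval (bvar j) x = (j \in x : nat)%:R.
Proof. by rewrite beval_bmono sub1set. Qed.

Lemma beval_bprod s x : beval (bprod s) x = \prod_(p <- s) beval p x.
Proof.
elim: s => [|a s IH]; first by rewrite big_nil beval_bmono sub0set.
by rewrite big_cons bevalM IH.
Qed.

(* Strong induction on #|m0|: once every proper subset of m0 has coefficient 0,
   p m0 is the value of p at m0. *)
Lemma beval_eq0 p : (forall x, beval p x = 0) -> p = 0.
Proof.
move=> hp; apply/ffunP => m0; rewrite ffunE.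
elim: {m0}_.+1 {-2}m0 (ltnSn #|m0|) => // d IH m0 hm0.
have := hp m0; rewrite bevalE (bigD1 m0) //= big1 ?addr0 // => m /andP[hm hne].
apply: IH; rewrite ltnS in hm0; apply: (leq_trans _ hm0); apply: proper_card.
by rewrite properEneq hne hm.
Qed.

Lemma beval_inj : injective beval.
Proof.
move=> p q hpq; apply/eqP; rewrite -subr_eq0; apply/eqP/beval_eq0 => x.
by rewrite bevalB hpq subrr.
Qed.

Lemma bmul1p p : bmul bone p = p.
Proof. by apply: beval_inj; apply/ffunP => x; rewrite bevalM beval_bmono sub0set mul1r. Qed.

Lemma bmul0p p : bmul 0 p = 0.
Proof. by apply: beval_inj; apply/ffunP => x; rewrite bevalM beval0 mul0r. Qed.

Lemma mem_ideal_gen s g : g \in s -> ideal_gen s g.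
Proof.
move=> gs; have gi : (index g s < size s)%N by rewrite index_mem.
apply/existsP; exists [ffun i : 'I_(size s) => if val i == index g s then bone else 0].
apply/eqP; rewrite (bigD1 (Ordinal gi)) //= big1 => [|i hi].
  by rewrite ffunE eqxx bmul1p nth_index // addr0.
by rewrite ffunE ifN ?bmul0p.
Qed.

Definition zeros s : {set {set 'I_k}} := [set x | all (fun g => beval g x == 0) s].

Lemma ideal_gen_vanishing s p :
  {in zeros s, forall x, beval p x = 0} -> ideal_gen s p.
Proof.
move=> hp; have [inv _ bevalK] := injF_bij beval_inj.
pose a x j := beval s`_j x.
pose c (i : 'I_(size s)) := inv [ffun x => beval p x * \prod_(j < i) (1 - a x j)].
apply/existsP; exists (finfun c); apply/eqP/beval_inj/ffunP => x.
have cE i : finfun c i = c i by rewrite ffunE.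
have -> : beval (\sum_i bmul (finfun c i) s`_i) x =
          beval p x * (1 - \prod_(j < size s) (1 - a x j)).
  rewrite beval_sum one_sub_prod_telescope mulr_sumr; apply: eq_bigr => i _.
  by rewrite bevalM cE bevalK ffunE -mulrA [_ * a x i]mulrC.
have [/hp -> | hx] := boolP (x \in zeros s); first by rewrite mul0r.
suff /eqP -> : \prod_(j < size s) (1 - a x j) == 0 by rewrite subr0 mulr1.
move: hx; rewrite inE => /allPn [g gs /F2_neq0 hg].
apply/prodf_eq0; exists (Ordinal (etrans (index_mem g s) gs)) => //.
by rewrite /a /= nth_index // hg subrr.
Qed.

End Evaluation.

Section StandardMonomials.
Variable k : nat.
Implicit Types (I : pred (bpoly k)) (V C : {set {set 'I_k}}).

Definition bmonos C : bpoly k := [ffun m => ((m \in C) : nat)%:R].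

Lemma is_groebner_LM I G :
  is_groebner I G -> forall f, I f -> f != 0 -> exists m, is_LM f m.
Proof. by move=> [_ hG] f hf hf0; have [_ _ [m [_ [? _ _]]]] := hG f hf hf0; exists m. Qed.

Lemma SM_subset_LMC I : SM I \subset ~: LMset I.
Proof.
apply/subsetP => m; rewrite inE in_setC; apply: contra => hm.
by apply: mem_ideal_gen; rewrite map_f ?mem_enum.
Qed.

(* Sets of non-leading monomials are separated by their values on V: the
   difference of two of them lies in I, and a nonzero one would have a leading
   monomial among them. *)
Lemma card_LMC_le I V :
  (forall p, {in V, forall x, beval p x = 0} -> I p) ->
  (forall f, I f -> f != 0 -> exists m, is_LM f m) ->
  (#|~: LMset I| <= #|V|)%N.
Proof.
move=> hI hLM; set S := ~: LMset I.
pose restr C : {ffun {x | x \in V} -> 'F_2} := [ffun v => beval (bmonos C) (val v)].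
have restr_inj : {in powerset S &, injective restr}.
  move=> C1 C2; rewrite !powersetE => /subsetP hC1 /subsetP hC2 e.
  set p := bmonos C1 - bmonos C2.
  have hp : I p.
    apply: hI => x hx; rewrite bevalB.
    by move/ffunP: e => /(_ (exist _ x hx)); rewrite !ffunE /= => ->; rewrite subrr.
  have [p0 | hp0] := eqVneq p 0.
    apply/setP => m; apply: natb_inj; apply/eqP; rewrite -subr_eq0.
    by move/ffunP: p0 => /(_ m); rewrite !ffunE => ->.
  have [m hm] := hLM p hp hp0.
  have mLM : m \in LMset I by rewrite inE; apply/existsP; exists p; rewrite hp hp0.
  suff : m \in S by rewrite in_setC mLM.
  move: hm => /andP[+ _]; rewrite !ffunE.
  have [/hC1 //|_] := boolP (m \in C1); have [/hC2 //|_] := boolP (m \in C2).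
  by rewrite subrr eqxx.
have := max_card (restr @: powerset S).
by rewrite card_in_imset // card_powerset card_ffun card_sig card_Fp // leq_exp2l.
Qed.

End StandardMonomials.

Section QuorumIdeal.
Variable n : nat.
Local Notation k := (n + n + n)%N.
Variables Q F : {set {set 'I_n}}.
Implicit Types (x : {set 'I_k}).

Definition xs x : {set 'I_n} := [set i | lshift n (lshift n i) \in x].
Definition ys x : {set 'I_n} := [set i | lshift n (rshift n i) \in x].
Definition ts x : {set 'I_n} := [set i | rshift (n + n) i \in x].

Lemma beval_Xv i x : beval (Xv i) x = (i \in xs x : nat)%:R.
Proof. by rewrite beval_bvar inE. Qed.
Lemma beval_Yv i x : beval (Yv i) x = (i \in ys x : nat)%:R.
Proof. by rewrite beval_bvar inE. Qed.
Lemma beval_Tv i x : beval (Tv i) x = (i \in ts x : nat)%:R.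
Proof. by rewrite beval_bvar inE. Qed.

Lemma beval_xi (A : {set 'I_n}) (Z : 'I_n -> bpoly k) (zs : {set 'I_n}) x :
  (forall i, beval (Z i) x = (i \in zs : nat)%:R) ->
  beval (xi A Z) x = (zs == A : nat)%:R.
Proof.
move=> hZ; rewrite beval_bprod big_map.
rewrite (eq_bigr (fun i => ((i \in zs) == (i \in A) : nat)%:R)) => [|i _].
  by rewrite prod_natb all_enum_eq.
rewrite !bevalD !beval_bconst hZ /phi.
by case: (i \in zs); case: (i \in A); apply: val_inj.
Qed.

Lemma beval_xiA (Z : 'I_n -> bpoly k) (zs : {set 'I_n}) x :
  (forall i, beval (Z i) x = (i \in zs : nat)%:R) ->
  beval (xiA Q Z) x = (zs \notin Q : nat)%:R.
Proof.
move=> hZ; rewrite beval_bprod big_map.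
rewrite (eq_bigr (fun A => ((A != zs) : nat)%:R)) => [|A _].
  by rewrite prod_natb (@all_predC _ (pred1 zs)) has_pred1 mem_enum.
rewrite bevalD (beval_xi _ hZ) beval_bconst eq_sym.
by case: (A == zs); apply: val_inj.
Qed.

Lemma beval_gamma (A : {set 'I_n}) (Z : 'I_n -> bpoly k) (zs : {set 'I_n}) x :
  (forall i, beval (Z i) x = (i \in zs : nat)%:R) ->
  beval (gamma (phi A) Z) x = (~~ (zs \subset A) : nat)%:R.
Proof.
move=> hZ; rewrite bevalD beval_bconst beval_bprod big_map.
rewrite (eq_bigr (fun i => ((i \in zs) ==> (i \in A) : nat)%:R)) => [|i _].
  by rewrite prod_natb all_enum_imply; case: (_ \subset _); apply: val_inj.
rewrite !bevalD bevalM !beval_bconst hZ /phi.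
by case: (i \in zs); case: (i \in A); apply: val_inj.
Qed.

Lemma beval_lambda x : beval (lambda F) x = (ts x \notin Fstar F : nat)%:R.
Proof.
rewrite beval_bprod big_map.
rewrite (eq_bigr (fun A : {set 'I_n} => (~~ (ts x \subset A) : nat)%:R)) => [|A _];
  last exact: beval_gamma (beval_Tv^~ x).
rewrite prod_natb inE; congr (nat_of_bool _)%:R; apply/allP/existsPn => h A.
  by apply/negP => /andP[hA]; apply/negP/h; rewrite mem_enum.
by rewrite mem_enum => hA; move: (h A); rewrite hA.
Qed.

Lemma beval_delta x : beval (delta n) x = (xs x :&: ys x \subset ts x : nat)%:R.
Proof.
rewrite beval_bprod big_map.
rewrite (eq_bigr (fun i => ((i \in xs x :&: ys x) ==> (i \in ts x) : nat)%:R)) => [|i _].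
  by rewrite prod_natb all_enum_imply.
rewrite !bevalD !bevalM beval_bconst beval_Tv beval_Xv beval_Yv in_setI.
by case: (i \in ts x); case: (i \in xs x); case: (i \in ys x); apply: val_inj.
Qed.

Definition ideal_gens : seq (bpoly k) :=
  [:: xiA Q (@Xv n); xiA Q (@Yv n); lambda F; delta n].

Definition coords x := ((xs x, ys x), ts x).

Lemma coords_inj : injective coords.
Proof.
move=> x1 x2 [e1 e2 e3]; apply/setP => j.
rewrite -(splitK j); case: (split j) => [a|b] /=.
  rewrite -(splitK a); case: (split a) => [c|d] /=.
    by move/setP: e1 => /(_ c); rewrite !inE.
  by move/setP: e2 => /(_ d); rewrite !inE.
by move/setP: e3 => /(_ b); rewrite !inE.
Qed.

Lemma coords_zeros :
  coords @: zeros ideal_gens \subset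
  [set t in setX (setX Q Q) (Fstar F) | ~~ (t.1.1 :&: t.1.2 \subset t.2)].
Proof.
apply/subsetP => _ /imsetP[x + ->]; rewrite inE /= andbT.
rewrite (beval_xiA (beval_Xv^~ x)) (beval_xiA (beval_Yv^~ x)) beval_lambda beval_delta.
by rewrite !natb_eq0 !negbK !inE => /and4P[-> -> -> ->].
Qed.

Lemma card_zeros_lt Q1 Q2 F0 :
  Q1 \in Q -> Q2 \in Q -> F0 \in F -> Q1 :&: Q2 \subset F0 ->
  (#|zeros ideal_gens| < #|Q| ^ 2 * #|Fstar F|)%N.
Proof.
move=> hQ1 hQ2 hF0 hsub.
rewrite -(card_imset _ coords_inj) expnS expn1 -!cardsX.
apply: leq_ltn_trans (subset_leq_card coords_zeros) (proper_card _).
apply/properP; split; first by apply/subsetP => t; rewrite inE => /andP[].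
exists ((Q1, Q2), F0); last by rewrite inE hsub andbF.
by rewrite !inE hQ1 hQ2; apply/existsP; exists F0; rewrite hF0 subxx.
Qed.

End QuorumIdeal.

Theorem mainTheorem4 (n : nat) (Q F : {set {set 'I_n}}) (G : seq (bpoly (n + n + n)))
  (hF : fail_prone F)
  (hG : is_groebner (ideal_I Q F) G)
  (hcard : #|SM (ideal_I Q F)| = (#|Q| ^ 2 * #|Fstar F|)%N) :
  forall Q1 Q2 F0, Q1 \in Q -> Q2 \in Q -> F0 \in F -> ~~ (Q1 :&: Q2 \subset F0).
Proof.
move=> Q1 Q2 F0 hQ1 hQ2 hF0; apply/negP => hsub.
have card_SM_le : (#|SM (ideal_I Q F)| <= #|zeros (ideal_gens Q F)|)%N.
  apply: leq_trans (subset_leq_card (SM_subset_LMC _)) _.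
  exact: card_LMC_le (@ideal_gen_vanishing _ _) (is_groebner_LM hG).
by move: (leq_ltn_trans card_SM_le (card_zeros_lt hQ1 hQ2 hF0 hsub)); rewrite hcard ltnn.
Qed.
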